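(* (i) The sequence $D_{2,1}=0$, $D_{2,m}=A_{2,m}-A_{2,m-1}$ ($m\geq2$) satisfies, for $m\geq 2$, $$D_{2,m}=\frac{m(2m-1)(2m+\lambda)}{(m-1+\lambda)(2m-2+\lambda)(2m-1+2\lambda)}D_{2,m-1}+\frac{2(m-1)m^2(m-1+\lambda)(m+\lambda)(2m-1+\lambda)(2m+\lambda)}{(2\lambda+1)(2m-1+2\lambda)},$$ and the solution of this recurrence with $D_{2,1}=0$ is $$D_{2,m}=\frac{2(m-1)m(m+\lambda)(m+\lambda+1)(2m+\lambda)\big[m^2+\lambda m-\frac{2}{2\lambda+3}\big]}{(2\lambda+1)(2\lambda+5)}.$$ (ii) The sequence $\widetilde D_{2,1}=0$, $\widetilde D_{2,m}=\widetilde A_{2,m}-\widetilde A_{2,m-1}$ ($m\geq2$) satisfies, for $m\geq2$, $$\widetilde D_{2,m}=\frac{(m-1)(2m-1)(2m-1+\lambda)}{(m-1+\lambda)(2m-3+\lambda)(2m-3+2\lambda)}\widetilde D_{2,m-1}+\frac{(m-1)(2m-1)(2m-2+\lambda)(2m-1+\lambda)\big[m^2+(\lambda-2)m-\lambda+\frac12\big]}{2(2\lambda+1)},$$ and the solution of this recurrence with $\widetilde D_{2,1}=0$ is $$\widetilde D_{2,m}=\frac{(m-1)(2m-1)(m+\lambda)(2m-1+\lambda)(2m-1+2\lambda)\big[m^2+(\lambda-1)m-\frac{2\lambda+1}{2}-\frac{2}{2\lambda+3}\big]}{2(2\lambda+1)(2\lambda+5)}.$$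
   Context: Fix $\lambda>-1/2$. Define polynomials $Q_m$ by $Q_0=1$, $Q_1(\mu)=1-\frac{2(\lambda+1)(\lambda+2)}{2\lambda+1}\mu$ and, for $m\geq2$, $$Q_m-Q_{m-1}=\frac{m(2m-1)(2m+\lambda)}{(m-1+\lambda)(2m-2+\lambda)(2m-1+2\lambda)}\big[Q_{m-1}-Q_{m-2}\big]-\frac{2m(2m-1+\lambda)(2m+\lambda)}{2m-1+2\lambda}\,\mu\,Q_{m-1}(\mu).$$ Define $\widetilde Q_m$ by $\widetilde Q_0=1$, $\widetilde Q_1(\mu)=1-\frac{\lambda+1}{2}\mu$ and, for $m\geq2$, $$\widetilde Q_m-\widetilde Q_{m-1}=\frac{(m-1)(2m-1)(2m-1+\lambda)}{(m-1+\lambda)(2m-3+\lambda)(2m-3+2\lambda)}\big[\widetilde Q_{m-1}-\widetilde Q_{m-2}\big]-\frac{(2m-1)(2m-2+\lambda)(2m-1+\lambda)}{2(m-1+\lambda)}\,\mu\,\widetilde Q_{m-1}(\mu).$$ Write $Q_m(\mu)=\sum_{i=0}^m(-1)^iA_{i,m}\mu^i$ and $\widetilde Q_m(\mu)=\sum_{i=0}^m(-1)^i\widetilde A_{i,m}\mu^i$, with $A_{i,m}=\widetilde A_{i,m}=0$ for $i>m$. *)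

From HB Require Import structures.
From mathcomp Require Import all_boot all_order all_algebra.
Set Implicit Arguments. Unset Strict Implicit. Unset Printing Implicit Defensive.
Import Order.TTheory GRing.Theory Num.Theory.
Local Open Scope ring_scope.

Section QDefs.
Variable R : realFieldType.
Variable l : R.

(* Q_m - Q_{m-1} = a m (Q_{m-1} - Q_{m-2}) - b m * mu * Q_{m-1}, m >= 2 *)
Definition Qa (m : nat) : R :=
  (m%:R * (2 * m%:R - 1) * (2 * m%:R + l)) /
  ((m%:R - 1 + l) * (2 * m%:R - 2 + l) * (2 * m%:R - 1 + 2 * l)).
Definition Qb (m : nat) : R :=
  (2 * m%:R * (2 * m%:R - 1 + l) * (2 * m%:R + l)) / (2 * m%:R - 1 + 2 * l).

Fixpoint Qpair (n : nat) : {poly R} * {poly R} :=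
  match n with
  | 0 => (1, 1 - (2 * (l + 1) * (l + 2) / (2 * l + 1)) *: 'X)
  | n'.+1 => let pq := Qpair n' in
             (pq.2, pq.2 + Qa n'.+2 *: (pq.2 - pq.1) - Qb n'.+2 *: ('X * pq.2))
  end.
Definition Q (m : nat) : {poly R} := (Qpair m).1.

Definition Qta (m : nat) : R :=
  ((m%:R - 1) * (2 * m%:R - 1) * (2 * m%:R - 1 + l)) /
  ((m%:R - 1 + l) * (2 * m%:R - 3 + l) * (2 * m%:R - 3 + 2 * l)).
Definition Qtb (m : nat) : R :=
  ((2 * m%:R - 1) * (2 * m%:R - 2 + l) * (2 * m%:R - 1 + l)) / (2 * (m%:R - 1 + l)).

Fixpoint Qtpair (n : nat) : {poly R} * {poly R} :=
  match n with
  | 0 => (1, 1 - ((l + 1) / 2) *: 'X)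
  | n'.+1 => let pq := Qtpair n' in
             (pq.2, pq.2 + Qta n'.+2 *: (pq.2 - pq.1) - Qtb n'.+2 *: ('X * pq.2))
  end.
Definition Qt (m : nat) : {poly R} := (Qtpair m).1.

(* Q_m(mu) = sum_i (-1)^i A_{i,m} mu^i *)
Definition A (i m : nat) : R := (-1) ^+ i * (Q m)`_i.
Definition At (i m : nat) : R := (-1) ^+ i * (Qt m)`_i.

Definition D2 (m : nat) : R := if (m <= 1)%N then 0 else A 2 m - A 2 m.-1.
Definition Dt2 (m : nat) : R := if (m <= 1)%N then 0 else At 2 m - At 2 m.-1.
End QDefs.

(** Comparing the coefficients of [mu^0], [mu^1], [mu^2] in the recurrence
    [Q_m = Q_(m-1) + a_m (Q_(m-1) - Q_(m-2)) - b_m mu Q_(m-1)] shows that the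
    constant coefficient stays [1], that the linear coefficient satisfies
    [A_(1,m) - A_(1,m-1) = a_m (A_(1,m-1) - A_(1,m-2)) + b_m], and that
    [D_(2,m) = a_m D_(2,m-1) + b_m A_(1,m-1)].  The first recurrence is solved
    by an explicit quartic in [m], which turns the second into the stated one;
    that the claimed closed forms satisfy these recurrences is a
    rational-function identity in [m] and [lambda] whose denominators are
    positive for [m >= 2] and [lambda > -1/2]. *)
From mathcomp Require Import all_boot all_order all_algebra.
From mathcomp Require Import ring lra.
Set Implicit Arguments. Unset Strict Implicit. Unset Printing Implicit Defensive.
Import Order.TTheory GRing.Theory Num.Theory.
Local Open Scope ring_scope.

Section ThreeTermPolyRecurrence.
Variable R : comNzRingType.
Variables (a b : nat -> R) (c : R) (p : nat -> {poly R}).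
Hypothesis p_rec : forall n,
  p n.+2 = p n.+1 + a n.+2 *: (p n.+1 - p n) - b n.+2 *: ('X * p n.+1).
Hypotheses (p0 : p 0 = 1) (p1 : p 1 = 1 - c *: 'X).

Lemma coef_diff_rec i n :
  (p n.+2)`_i - (p n.+1)`_i =
  a n.+2 * ((p n.+1)`_i - (p n)`_i) - b n.+2 * ('X * p n.+1)`_i.
Proof. by rewrite p_rec !(coefB, coefD, coefN, coefZ); ring. Qed.

Lemma coef0_eq1 n : (p n)`_0 = 1.
Proof.
suff [] : (p n)`_0 = 1 /\ (p n.+1)`_0 = 1 by [].
elim: n => [|n [IH IH1]].
  by rewrite p0 p1 !(coefB, coef1, coefZ, coefX) /= mulr0 subr0.
split=> //; apply/eqP; rewrite -subr_eq0 -[X in _ - X]IH1 coef_diff_rec.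
by rewrite coefXM IH IH1 subrr !mulr0 subr0.
Qed.

Lemma coef2_diff0 : (p 1)`_2 - (p 0)`_2 = 0.
Proof. by rewrite p0 p1 !(coefB, coef1, coefZ, coefX) /= mulr0 !subr0. Qed.

Variable F1 : nat -> R.
Hypotheses (F1_0 : F1 0 = 0) (F1_1 : F1 1 = c).
Hypothesis F1_rec : forall n,
  F1 n.+2 - F1 n.+1 = a n.+2 * (F1 n.+1 - F1 n) + b n.+2.

Lemma coef1_closed n : (p n)`_1 = - F1 n.
Proof.
suff [] : (p n)`_1 = - F1 n /\ (p n.+1)`_1 = - F1 n.+1 by [].
elim: n => [|n [IH IH1]].
  by rewrite p0 p1 F1_0 F1_1 !(coefB, coef1, coefZ, coefX) /= mulr1 sub0r oppr0.
split=> //; have := coef_diff_rec 1 n; rewrite coefXM /= coef0_eq1 IH IH1 => rec1.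
rewrite -[(p n.+2)`_1](subrK (- F1 n.+1)) rec1.
by rewrite -[F1 n.+2](subrK (F1 n.+1)) F1_rec; ring.
Qed.

Lemma coef2_diff_rec n :
  (p n.+2)`_2 - (p n.+1)`_2 =
  a n.+2 * ((p n.+1)`_2 - (p n)`_2) + b n.+2 * F1 n.+1.
Proof. by rewrite coef_diff_rec coefXM /= coef1_closed mulrN opprK. Qed.

Variable F2 : nat -> R.
Hypothesis F2_1 : F2 1 = 0.
Hypothesis F2_rec : forall n, F2 n.+2 = a n.+2 * F2 n.+1 + b n.+2 * F1 n.+1.

Lemma coef2_diff_closed n : (p n.+1)`_2 - (p n)`_2 = F2 n.+1.
Proof.
elim: n => [|n IH]; first by rewrite coef2_diff0 F2_1.
by rewrite coef2_diff_rec IH F2_rec.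
Qed.

End ThreeTermPolyRecurrence.

(* [lra] ignores section hypotheses, so the bound on [lambda] is passed in. *)
Ltac field_pos hl :=
  field; repeat (apply/andP; split); apply/negP => /eqP; move: hl; lra.

Ltac field_nat R n hl :=
  rewrite -?[n.+2]addn2 -?[n.+1]addn1 ?natrD;
  have n_ge0 := ler0n R n; field_pos hl.

Section QCoefficients.
Variables (R : realFieldType) (l : R).
Hypothesis hl : - (1 / 2) < l.

Lemma Q_rec n :
  Q l n.+2 = Q l n.+1 + Qa l n.+2 *: (Q l n.+1 - Q l n) - Qb l n.+2 *: ('X * Q l n.+1).
Proof. by []. Qed.

Lemma Q0 : Q l 0 = 1. Proof. by []. Qed.

Lemma Q1 : Q l 1 = 1 - (2 * (l + 1) * (l + 2) / (2 * l + 1)) *: 'X.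
Proof. by []. Qed.

Definition A1_closed (m : nat) : R :=
  m%:R * (m%:R + 1) * (m%:R + l) * (m%:R + 1 + l) / (2 * l + 1).

Definition D2_closed (m : nat) : R :=
  (2 * (m%:R - 1) * m%:R * (m%:R + l) * (m%:R + l + 1) * (2 * m%:R + l)
     * (m%:R ^+ 2 + l * m%:R - 2 / (2 * l + 3))) /
  ((2 * l + 1) * (2 * l + 5)).

Lemma A1_closed0 : A1_closed 0 = 0.
Proof. by rewrite /A1_closed !mul0r. Qed.

Lemma A1_closed1 : A1_closed 1 = 2 * (l + 1) * (l + 2) / (2 * l + 1).
Proof. by rewrite /A1_closed; field_pos hl. Qed.

Lemma A1_closed_rec n :
  A1_closed n.+2 - A1_closed n.+1 =
  Qa l n.+2 * (A1_closed n.+1 - A1_closed n) + Qb l n.+2.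
Proof. rewrite /A1_closed /Qa /Qb; field_nat R n hl. Qed.

Lemma D2_closed1 : D2_closed 1 = 0.
Proof. by rewrite /D2_closed subrr mulr0 !mul0r. Qed.

Lemma D2_closed_rec n :
  D2_closed n.+2 = Qa l n.+2 * D2_closed n.+1 + Qb l n.+2 * A1_closed n.+1.
Proof. rewrite /D2_closed /A1_closed /Qa /Qb; field_nat R n hl. Qed.

Lemma D2E m : D2 l m.+1 = (Q l m.+1)`_2 - (Q l m)`_2.
Proof.
case: m => [|m]; first by rewrite (coef2_diff0 Q0 Q1).
by rewrite /D2 /A /= sqrrN expr1n !mul1r.
Qed.

Lemma D2_rec m : (2 <= m)%N ->
  D2 l m = Qa l m * D2 l m.-1
    + (2 * (m%:R - 1) * m%:R ^+ 2 * (m%:R - 1 + l) * (m%:R + l)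
         * (2 * m%:R - 1 + l) * (2 * m%:R + l)) /
      ((2 * l + 1) * (2 * m%:R - 1 + 2 * l)).
Proof.
case: m => [|[|n]] // _; rewrite /= !D2E.
rewrite (coef2_diff_rec Q_rec Q0 Q1 A1_closed0 A1_closed1 A1_closed_rec).
congr (_ + _); rewrite /Qb /A1_closed; field_nat R n hl.
Qed.

Lemma D2_closedE m : (1 <= m)%N -> D2 l m = D2_closed m.
Proof.
case: m => [|m] // _; rewrite D2E.
exact: (coef2_diff_closed Q_rec Q0 Q1 A1_closed0 A1_closed1 A1_closed_rec
          D2_closed1 D2_closed_rec).
Qed.

End QCoefficients.

Section QtCoefficients.
Variables (R : realFieldType) (l : R).
Hypothesis hl : - (1 / 2) < l.

Lemma Qt_rec n :
  Qt l n.+2 = Qt l n.+1 + Qta l n.+2 *: (Qt l n.+1 - Qt l n)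
              - Qtb l n.+2 *: ('X * Qt l n.+1).
Proof. by []. Qed.

Lemma Qt0 : Qt l 0 = 1. Proof. by []. Qed.

Lemma Qt1 : Qt l 1 = 1 - ((l + 1) / 2) *: 'X.
Proof. by []. Qed.

Definition At1_closed (m : nat) : R :=
  m%:R * (m%:R + l) * (m%:R ^+ 2 + l * m%:R - 1 / 2) / (2 * l + 1).

Definition Dt2_closed (m : nat) : R :=
  ((m%:R - 1) * (2 * m%:R - 1) * (m%:R + l) * (2 * m%:R - 1 + l)
     * (2 * m%:R - 1 + 2 * l)
     * (m%:R ^+ 2 + (l - 1) * m%:R - (2 * l + 1) / 2 - 2 / (2 * l + 3))) /
  (2 * (2 * l + 1) * (2 * l + 5)).

Lemma At1_closed0 : At1_closed 0 = 0.
Proof. by rewrite /At1_closed !mul0r. Qed.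

Lemma At1_closed1 : At1_closed 1 = (l + 1) / 2.
Proof. by rewrite /At1_closed; field_pos hl. Qed.

Lemma At1_closed_rec n :
  At1_closed n.+2 - At1_closed n.+1 =
  Qta l n.+2 * (At1_closed n.+1 - At1_closed n) + Qtb l n.+2.
Proof. rewrite /At1_closed /Qta /Qtb; field_nat R n hl. Qed.

Lemma Dt2_closed1 : Dt2_closed 1 = 0.
Proof. by rewrite /Dt2_closed subrr !mul0r. Qed.

Lemma Dt2_closed_rec n :
  Dt2_closed n.+2 = Qta l n.+2 * Dt2_closed n.+1 + Qtb l n.+2 * At1_closed n.+1.
Proof. rewrite /Dt2_closed /At1_closed /Qta /Qtb; field_nat R n hl. Qed.

Lemma Dt2E m : Dt2 l m.+1 = (Qt l m.+1)`_2 - (Qt l m)`_2.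
Proof.
case: m => [|m]; first by rewrite (coef2_diff0 Qt0 Qt1).
by rewrite /Dt2 /At /= sqrrN expr1n !mul1r.
Qed.

Lemma Dt2_rec m : (2 <= m)%N ->
  Dt2 l m = Qta l m * Dt2 l m.-1
    + ((m%:R - 1) * (2 * m%:R - 1) * (2 * m%:R - 2 + l) * (2 * m%:R - 1 + l)
         * (m%:R ^+ 2 + (l - 2) * m%:R - l + 1 / 2)) /
      (2 * (2 * l + 1)).
Proof.
case: m => [|[|n]] // _; rewrite /= !Dt2E.
rewrite (coef2_diff_rec Qt_rec Qt0 Qt1 At1_closed0 At1_closed1 At1_closed_rec).
congr (_ + _); rewrite /Qtb /At1_closed; field_nat R n hl.
Qed.

Lemma Dt2_closedE m : (1 <= m)%N -> Dt2 l m = Dt2_closed m.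
Proof.
case: m => [|m] // _; rewrite Dt2E.
exact: (coef2_diff_closed Qt_rec Qt0 Qt1 At1_closed0 At1_closed1 At1_closed_rec
          Dt2_closed1 Dt2_closed_rec).
Qed.

End QtCoefficients.

Theorem lemma3p3 (R : realFieldType) (l : R) (hl : - (1 / 2) < l) :
  (* (i) *)
  (forall m : nat, (2 <= m)%N ->
     D2 l m =
       (m%:R * (2 * m%:R - 1) * (2 * m%:R + l)) /
       ((m%:R - 1 + l) * (2 * m%:R - 2 + l) * (2 * m%:R - 1 + 2 * l)) * D2 l m.-1
     + (2 * (m%:R - 1) * m%:R ^+ 2 * (m%:R - 1 + l) * (m%:R + l)
          * (2 * m%:R - 1 + l) * (2 * m%:R + l)) /
       ((2 * l + 1) * (2 * m%:R - 1 + 2 * l))) /\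
  (forall m : nat, (1 <= m)%N ->
     D2 l m =
       (2 * (m%:R - 1) * m%:R * (m%:R + l) * (m%:R + l + 1) * (2 * m%:R + l)
          * (m%:R ^+ 2 + l * m%:R - 2 / (2 * l + 3))) /
       ((2 * l + 1) * (2 * l + 5))) /\
  (* (ii) *)
  (forall m : nat, (2 <= m)%N ->
     Dt2 l m =
       ((m%:R - 1) * (2 * m%:R - 1) * (2 * m%:R - 1 + l)) /
       ((m%:R - 1 + l) * (2 * m%:R - 3 + l) * (2 * m%:R - 3 + 2 * l)) * Dt2 l m.-1
     + ((m%:R - 1) * (2 * m%:R - 1) * (2 * m%:R - 2 + l) * (2 * m%:R - 1 + l)
          * (m%:R ^+ 2 + (l - 2) * m%:R - l + 1 / 2)) /
       (2 * (2 * l + 1))) /\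
  (forall m : nat, (1 <= m)%N ->
     Dt2 l m =
       ((m%:R - 1) * (2 * m%:R - 1) * (m%:R + l) * (2 * m%:R - 1 + l)
          * (2 * m%:R - 1 + 2 * l)
          * (m%:R ^+ 2 + (l - 1) * m%:R - (2 * l + 1) / 2 - 2 / (2 * l + 3))) /
       (2 * (2 * l + 1) * (2 * l + 5))).
Proof.
split; first exact: D2_rec.
split; first exact: D2_closedE.
split; first exact: Dt2_rec.
exact: Dt2_closedE.
Qed.
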